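(* Let $(\mathcal{S},\widehat{\mathcal{S}},\sigma,\tau,\iota)$ be a duplicated category of sets, let $A,B$ be objects of $\mathcal{S}$ and let $f:A\to B$ be a morphism in $\mathcal{S}$, with name $\widehat{f}:1\to B^A$. Then $$\kappa_{A,B}\circ\iota_{B^A}\circ\sigma(\widehat{f})=\widehat{\tau(f)},$$ where $\widehat{\tau(f)}:1\to\tau(B)^{\tau(A)}$ is the name (exponential transpose) of $\tau(f):\tau(A)\to\tau(B)$ in $\widehat{\mathcal{S}}$.
   Context: A duplicated category of sets is a quintet $(\mathcal{S},\widehat{\mathcal{S}},\sigma,\tau,\iota)$ such that: (i) $\mathcal{S}$ and $\widehat{\mathcal{S}}$ are categories satisfying Lawvere's axioms of the Elementary Theory of the Category of Sets (ETCS), i.e. each is a well-pointed topos with a natural numbers object satisfying the axiom of choice; (ii) $\sigma:\mathcal{S}\to\widehat{\mathcal{S}}$ is a functor preserving all finite limits, the subobject classifier $2$, exponentials and natural numbers objects; (iii) $\tau:\mathcal{S}\to\widehat{\mathcal{S}}$ is a functor preserving all finite limits; (iv) $\iota:\sigma\to\tau$ is a natural transformation such that $\iota_X=\mathrm{id}_{\sigma(X)}=\mathrm{id}_{\tau(X)}$ for every finite object $X$ of $\mathcal{S}$ (so $\sigma(1)=\tau(1)=1$). For objects $A,B$ of $\mathcal{S}$, $ev_{A,B}:A\times B^A\to B$ is the evaluation map, and $\kappa_{A,B}:\tau(B^A)\to\tau(B)^{\tau(A)}$ is the exponential transpose (lambda conversion) of the composite $\tau(A)\times\tau(B^A)\cong\tau(A\times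 B^A)\xrightarrow{\tau(ev_{A,B})}\tau(B)$. For $g:C\to D$, $\widehat{g}:1\to D^C$ denotes its exponential transpose (name). *)

From Stdlib Require Import ClassicalEpsilon.

Set Implicit Arguments.
Unset Strict Implicit.

Record Category := {
  ob :> Type;
  hom : ob -> ob -> Type;
  idm : forall A, hom A A;
  comp : forall A B C, hom B C -> hom A B -> hom A C;
  comp_id_l : forall A B (f : hom A B), comp (idm B) f = f;
  comp_id_r : forall A B (f : hom A B), comp f (idm A) = f;
  comp_assoc : forall A B C D (f : hom A B) (g : hom B C) (h : hom C D),
      comp h (comp g f) = comp (comp h g) f
}.
Arguments hom {c} _ _.
Arguments idm {c} _.
Arguments comp {c A B C} _ _.

Declare Scope cat_scope.
Notation "g ∘ f" := (comp g f) (at level 40, left associativity) : cat_scope.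
Open Scope cat_scope.

Section Predicates.
Variable C : Category.

Definition monic (A B : C) (m : hom A B) : Prop :=
  forall X (u v : hom X A), m ∘ u = m ∘ v -> u = v.

Definition epic (A B : C) (e : hom A B) : Prop :=
  forall Y (u v : hom B Y), u ∘ e = v ∘ e -> u = v.

Definition is_iso (A B : C) (f : hom A B) : Prop :=
  exists g : hom B A, g ∘ f = idm A /\ f ∘ g = idm B.

Definition is_terminal (T : C) : Prop :=
  forall X : C, exists! t : hom X T, True.

Definition is_product (A B P : C) (p1 : hom P A) (p2 : hom P B) : Prop :=
  forall X (f : hom X A) (g : hom X B),
    exists! h : hom X P, p1 ∘ h = f /\ p2 ∘ h = g.

Definition is_equalizer (A B E : C) (f g : hom A B) (e : hom E A) : Prop :=
  f ∘ e = g ∘ e /\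
  forall X (x : hom X A), f ∘ x = g ∘ x -> exists! h : hom X E, e ∘ h = x.

Definition is_pullback (A B Z P : C) (f : hom A Z) (g : hom B Z)
    (p : hom P A) (q : hom P B) : Prop :=
  f ∘ p = g ∘ q /\
  forall Q (u : hom Q A) (v : hom Q B), f ∘ u = g ∘ v ->
    exists! h : hom Q P, p ∘ h = u /\ q ∘ h = v.

(* (E, ev : P -> B), with P = A x E via p1 p2, is an exponential B^A. *)
Definition is_exponential (A B E P : C) (p1 : hom P A) (p2 : hom P E)
    (ev : hom P B) : Prop :=
  is_product p1 p2 /\
  forall (X Q : C) (q1 : hom Q A) (q2 : hom Q X) (g : hom Q B),
    is_product q1 q2 ->
    exists! h : hom X E,
      forall k : hom Q P, p1 ∘ k = q1 -> p2 ∘ k = h ∘ q2 -> ev ∘ k = g.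

Definition is_subobject_classifier (T Om : C) (tr : hom T Om) : Prop :=
  is_terminal T /\
  forall A X (m : hom X A), monic m ->
    exists! chi : hom A Om, forall t : hom X T, is_pullback chi tr m t.

Definition is_NNO (T N : C) (z : hom T N) (s : hom N N) : Prop :=
  is_terminal T /\
  forall X (x : hom T X) (f : hom X X),
    exists! u : hom N X, u ∘ z = x /\ u ∘ s = f ∘ u.

(* finite object: Dedekind-finite (equivalent to finiteness under ETCS) *)
Definition finite_obj (X : C) : Prop :=
  forall m : hom X X, monic m -> is_iso m.

End Predicates.

Record ETCS := {
  cat :> Category;
  one : cat;
  one_terminal : is_terminal one;
  prod : cat -> cat -> cat;
  pr1 : forall A B, hom (prod A B) A;
  pr2 : forall A B, hom (prod A B) B;
  prod_product : forall A B, is_product (pr1 A B) (pr2 A B);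
  has_equalizers : forall A B (f g : hom A B),
      exists (E : cat) (e : hom E A), is_equalizer f g e;
  expo : cat -> cat -> cat;                    (* expo A B = B^A *)
  ev : forall A B, hom (prod A (expo A B)) B;
  expo_exponential : forall A B,
      is_exponential (pr1 A (expo A B)) (pr2 A (expo A B)) (ev A B);
  omega : cat;
  true_ : hom one omega;
  omega_classifier : is_subobject_classifier true_;
  nat_obj : cat;
  nat_zero : hom one nat_obj;
  nat_succ : hom nat_obj nat_obj;
  nat_nno : is_NNO nat_zero nat_succ;
  well_pointed : forall A B (f g : hom A B),
      (forall x : hom one A, f ∘ x = g ∘ x) -> f = g;
  nondegenerate : exists (X Y : cat) (f g : hom X Y), f <> g;
  choice : forall A B (e : hom A B), epic e -> exists s : hom B A, e ∘ s = @idm cat B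
}.

Arguments one {_}.
Arguments prod {_} _ _.
Arguments pr1 {_} A B.
Arguments pr2 {_} A B.
Arguments expo {_} _ _.
Arguments ev {_} A B.
Arguments omega {_}.
Arguments true_ {_}.
Arguments nat_obj {_}.
Arguments nat_zero {_}.
Arguments nat_succ {_}.
Arguments expo_exponential {_} A B.
Arguments prod_product {_} A B.

Definition curry (S : ETCS) (A B X : S) (g : hom (prod A X) B) : hom X (expo A B) :=
  proj1_sig (constructive_indefinite_description _
    (proj2 (expo_exponential A B) X (prod A X) (pr1 A X) (pr2 A X) g
       (prod_product A X))).

Definition name_at (S : ETCS) (T C D : S) (f : hom C D) : hom T (expo C D) :=
  curry (f ∘ pr1 C T).

Definition name (S : ETCS) (C D : S) (f : hom C D) : hom one (expo C D) :=
  name_at one f.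

Record Functor (C D : Category) := {
  fob :> C -> D;
  fmap : forall A B, hom A B -> hom (fob A) (fob B);
  fmap_id : forall A, fmap (idm A) = idm (fob A);
  fmap_comp : forall A B E (f : hom A B) (g : hom B E),
      fmap (g ∘ f) = fmap g ∘ fmap f
}.
Arguments fmap {C D} _ {A B} _.

Record NatTrans (C D : Category) (F G : Functor C D) := {
  component :> forall X : C, hom (F X) (G X);
  naturality : forall X Y (h : hom X Y),
      component Y ∘ fmap F h = fmap G h ∘ component X
}.

Definition preserves_finite_limits (S T : ETCS) (F : Functor S T) : Prop :=
  is_terminal (F one) /\
  (forall A B : S, is_product (fmap F (pr1 A B)) (fmap F (pr2 A B))) /\
  (forall (A B E : S) (f g : hom A B) (e : hom E A),
      is_equalizer f g e -> is_equalizer (fmap F f) (fmap F g) (fmap F e)).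

Definition preserves_omega (S T : ETCS) (F : Functor S T) : Prop :=
  is_subobject_classifier (fmap F (@true_ S)).

Definition preserves_exponentials (S T : ETCS) (F : Functor S T) : Prop :=
  forall A B : S,
    is_exponential (fmap F (pr1 A (expo A B))) (fmap F (pr2 A (expo A B)))
                   (fmap F (ev A B)).

Definition preserves_NNO (S T : ETCS) (F : Functor S T) : Prop :=
  is_NNO (fmap F (@nat_zero S)) (fmap F (@nat_succ S)).

Definition id_cast (C : Category) (X Y : C) (e : X = Y) : hom X Y :=
  match e in _ = Z return hom X Z with eq_refl => idm X end.

Record DupCat := {
  S : ETCS;
  Sh : ETCS;
  sigma : Functor S Sh;
  tau : Functor S Sh;
  sigma_lex : preserves_finite_limits sigma;
  sigma_omega : preserves_omega sigma;
  sigma_exp : preserves_exponentials sigma;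
  sigma_nno : preserves_NNO sigma;
  tau_lex : preserves_finite_limits tau;
  iota : NatTrans sigma tau;
  iota_finite : forall X : S, finite_obj X ->
      exists e : sigma X = tau X, iota X = id_cast e
}.

(* The canonical isomorphism  tau(A) x tau(E) ~= tau(A x E)  in Sh,
   i.e. the inverse of <tau pr1, tau pr2>, obtained from preservation
   of products by tau. *)
Definition tau_prod_iso (D : DupCat) (A E : S D) :
    hom (prod (tau D A) (tau D E)) (tau D (prod A E)) :=
  proj1_sig (constructive_indefinite_description _
    (proj1 (proj2 (tau_lex D)) A E (prod (tau D A) (tau D E))
       (pr1 (tau D A) (tau D E)) (pr2 (tau D A) (tau D E)))).

Definition kappa (D : DupCat) (A B : S D) :
    hom (tau D (expo A B)) (expo (tau D A) (tau D B)) :=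
  curry (fmap (tau D) (ev A B) ∘ @tau_prod_iso D A (expo A B)).

(* Naturality of ι turns ι ∘ σ(f^) into τ(f^) ∘ ι_1. Since τ preserves products,
   κ ∘ τ(λg) = λ(τg ∘ φ) for every g : A × X → B, where φ is the comparison
   τA × τX ≅ τ(A × X); and currying is natural in its parameter. Applied to
   g = f ∘ pr1 and precomposed with ι_1, this gives λ(τf ∘ pr1), the name of τf. *)
From Stdlib Require Import ClassicalEpsilon.

Lemma product_hom_ext {C : Category} {A B P : C} {p1 : hom P A} {p2 : hom P B} :
  is_product p1 p2 -> forall X (h h' : hom X P),
  p1 ∘ h = p1 ∘ h' -> p2 ∘ h = p2 ∘ h' -> h = h'.
Proof.
  intros Hprod X h h' E1 E2.
  destruct (Hprod X (p1 ∘ h) (p2 ∘ h)) as [u [_ Hu]].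
  rewrite <- (Hu h) by auto. apply Hu. auto.
Qed.

Section Cartesian.
Variable S : ETCS.

Lemma prod_pairing_exists (X A B : S) (f : hom X A) (g : hom X B) :
  exists h : hom X (prod A B), pr1 A B ∘ h = f /\ pr2 A B ∘ h = g.
Proof. destruct (prod_product A B X f g) as [h [Hh _]]. eauto. Qed.

Definition pairing {X A B : S} (f : hom X A) (g : hom X B) : hom X (prod A B) :=
  proj1_sig (constructive_indefinite_description _
    (prod_pairing_exists X A B f g)).

Lemma pr1_pairing (X A B : S) (f : hom X A) (g : hom X B) :
  pr1 A B ∘ pairing f g = f.
Proof.
  unfold pairing.
  match goal with |- context [proj1_sig ?w] => exact (proj1 (proj2_sig w)) end.
Qed.

Lemma pr2_pairing (X A B : S) (f : hom X A) (g : hom X B) :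
  pr2 A B ∘ pairing f g = g.
Proof.
  unfold pairing.
  match goal with |- context [proj1_sig ?w] => exact (proj2 (proj2_sig w)) end.
Qed.

Definition prod_mapr (A : S) {X Y : S} (h : hom X Y) : hom (prod A X) (prod A Y) :=
  pairing (pr1 A X) (h ∘ pr2 A X).

Lemma pr1_prod_mapr (A X Y : S) (h : hom X Y) : pr1 A Y ∘ prod_mapr A h = pr1 A X.
Proof. apply pr1_pairing. Qed.

Lemma pr2_prod_mapr (A X Y : S) (h : hom X Y) :
  pr2 A Y ∘ prod_mapr A h = h ∘ pr2 A X.
Proof. apply pr2_pairing. Qed.

Lemma prod_mapr_comp (A X Y Z : S) (u : hom Y Z) (v : hom X Y) :
  prod_mapr A (u ∘ v) = prod_mapr A u ∘ prod_mapr A v.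
Proof.
  apply (product_hom_ext (prod_product A Z)).
  - rewrite pr1_prod_mapr, comp_assoc, !pr1_prod_mapr. reflexivity.
  - rewrite pr2_prod_mapr, comp_assoc, pr2_prod_mapr,
      <- (comp_assoc _ (pr2 A Y)), pr2_prod_mapr, comp_assoc. reflexivity.
Qed.

Lemma ev_curry (A B X : S) (g : hom (prod A X) B) :
  ev A B ∘ prod_mapr A (curry g) = g.
Proof.
  unfold curry.
  match goal with |- context [proj1_sig ?w] => destruct (proj2_sig w) as [Hev _] end.
  apply Hev; [apply pr1_prod_mapr | apply pr2_prod_mapr].
Qed.

Lemma curry_unique (A B X : S) (g : hom (prod A X) B) (h : hom X (expo A B)) :
  ev A B ∘ prod_mapr A h = g -> h = curry g.
Proof.
  intros Hh. unfold curry.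
  match goal with |- context [proj1_sig ?w] => destruct (proj2_sig w) as [_ Huniq] end.
  symmetry. apply Huniq. intros k Hk1 Hk2.
  replace k with (prod_mapr A h); [exact Hh |].
  apply (product_hom_ext (prod_product A (expo A B))).
  - rewrite pr1_prod_mapr. auto.
  - rewrite pr2_prod_mapr. auto.
Qed.

Lemma curry_natural (A B X Y : S) (g : hom (prod A X) B) (h : hom Y X) :
  curry g ∘ h = curry (g ∘ prod_mapr A h).
Proof.
  apply curry_unique.
  rewrite prod_mapr_comp, comp_assoc, ev_curry. reflexivity.
Qed.

End Cartesian.

Arguments prod_mapr {S} A {X Y} h.

Section Duplicated.
Variable D : DupCat.

Lemma tau_prod_iso_pr (A X : S D) :
  fmap (tau D) (pr1 A X) ∘ tau_prod_iso A X = pr1 _ _ /\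
  fmap (tau D) (pr2 A X) ∘ tau_prod_iso A X = pr2 _ _.
Proof.
  unfold tau_prod_iso.
  match goal with |- context [proj1_sig ?w] => exact (proj1 (proj2_sig w)) end.
Qed.

Lemma tau_prod_iso_natural (A X Y : S D) (h : hom X Y) :
  tau_prod_iso A Y ∘ prod_mapr (tau D A) (fmap (tau D) h)
  = fmap (tau D) (prod_mapr A h) ∘ tau_prod_iso A X.
Proof.
  destruct (tau_prod_iso_pr A X) as [HX1 HX2].
  destruct (tau_prod_iso_pr A Y) as [HY1 HY2].
  apply (product_hom_ext (proj1 (proj2 (tau_lex D)) A Y)).
  - rewrite !comp_assoc, HY1, <- fmap_comp, pr1_prod_mapr, pr1_prod_mapr, HX1.
    reflexivity.
  - rewrite !comp_assoc, HY2, <- fmap_comp, pr2_prod_mapr, pr2_prod_mapr,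
      fmap_comp, <- comp_assoc, HX2. reflexivity.
Qed.

Lemma kappa_tau_curry (A B X : S D) (g : hom (prod A X) B) :
  kappa A B ∘ fmap (tau D) (curry g)
  = curry (fmap (tau D) g ∘ tau_prod_iso A X).
Proof.
  unfold kappa.
  rewrite curry_natural, <- comp_assoc, tau_prod_iso_natural, comp_assoc,
    <- fmap_comp, ev_curry. reflexivity.
Qed.

End Duplicated.

Theorem mainTheorem4 (D : DupCat) (A B : S D) (f : hom A B) :
  @kappa D A B ∘ iota D (expo A B) ∘ fmap (sigma D) (name f)
  = name_at (sigma D (@one (S D))) (fmap (tau D) f).
Proof.
  unfold name, name_at.
  rewrite <- comp_assoc, naturality, comp_assoc, kappa_tau_curry, curry_natural.
  f_equal.
  destruct (tau_prod_iso_pr D A one) as [Hpr1 _].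
  rewrite fmap_comp, <- !comp_assoc, (comp_assoc _ (tau_prod_iso A one)), Hpr1,
    pr1_prod_mapr. reflexivity.
Qed.
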